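(* Let $R\ge 2$, $s=R+2$, and let $r$ be any positive integer. Then $\mathrm{Perf}(s,r,R)=\emptyset$, i.e. there is no non-trivial $R$-perfect code in $\mathbb F_q^{s\times r}$ with respect to the NRT metric.
   Context: $q$ is a prime power, $\mathbb F_q^{s\times r}$ the set of $s\times r$ matrices over $\mathbb F_q$ with rows in $\mathbb F_q^{1\times r}$. For a row $y=(y_1,\dots,y_r)$, the NRT weight is $w(y)=\max\{j: y_j\neq 0\}$ if $y\ne0$ and $w(0)=0$; for a matrix, $w(x)=\sum_i w(x_i)$. The NRT metric is $d(x,y)=w(x-y)$; $B(c,R)=\{x: d(x,c)\le R\}$. A code $C$ is $R$-perfect if the balls $B(c,R)$, $c\in C$, are pairwise disjoint and cover $\mathbb F_q^{s\times r}$; non-trivial means $|C|>1$ and $C\ne\mathbb F_q^{s\times r}$. $\mathrm{Perf}(s,r,R)$ is the set of non-trivial $R$-perfect codes in $\mathbb F_q^{s\times r}$. *)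

From mathcomp Require Import all_boot all_order all_algebra all_field.
Set Implicit Arguments. Unset Strict Implicit. Unset Printing Implicit Defensive.
Import GRing.Theory.
Local Open Scope nat_scope.

Definition nrt_row_weight (F : finFieldType) (s r : nat) (x : 'M[F]_(s, r)) (i : 'I_s) : nat :=
  \max_(j < r | x i j != 0%R) j.+1.

Definition nrt_weight (F : finFieldType) (s r : nat) (x : 'M[F]_(s, r)) : nat :=
  \sum_(i < s) nrt_row_weight x i.

Definition nrt_dist (F : finFieldType) (s r : nat) (x y : 'M[F]_(s, r)) : nat :=
  nrt_weight (x - y)%R.

Definition nrt_ball (F : finFieldType) (s r : nat) (c : 'M[F]_(s, r)) (R : nat)
  : {set 'M[F]_(s, r)} :=
  [set x | (nrt_dist x c <= R)%N].

Definition perfect_code (F : finFieldType) (s r R : nat) (C : {set 'M[F]_(s, r)}) : Prop :=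
  (forall c1 c2, c1 \in C -> c2 \in C -> c1 != c2 ->
     [disjoint nrt_ball c1 R & nrt_ball c2 R]) /\
  (forall x : 'M[F]_(s, r), exists2 c, c \in C & x \in nrt_ball c R).

Definition nontrivial_code (F : finFieldType) (s r : nat) (C : {set 'M[F]_(s, r)}) : Prop :=
  (1 < #|C|)%N /\ C != [set: 'M[F]_(s, r)].

Definition Perf (F : finFieldType) (s r R : nat) (C : {set 'M[F]_(s, r)}) : Prop :=
  nontrivial_code C /\ perfect_code R C.

From mathcomp Require Import all_boot all_order all_algebra all_field.
Set Implicit Arguments. Unset Strict Implicit. Unset Printing Implicit Defensive.
Import GRing.Theory.

(* The NRT row weight is an ultrametric on rows, the weight of a matrix is the
   sum of its row weights, and the distance is translation invariant.  Fix a
   codeword c0 and let P S be the matrix whose rows outside S are the first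
   unit vector (of weight 1), so that P S has weight #|~: S|; put E := P set0.
   For every row j the word c0 + P {j} has distance R + 1 from c0, so it is
   covered by a codeword c0 + D with D <> 0.  Comparing with c0 + P {j, k},
   which lies at distance R from c0, forces row k of D to equal row k of E for
   every k <> j, and then c0 + E is within R of c0 + D (lemmas
   [neighbour_rows] and [neighbour_near_E]).  Doing this for two rows j = 0, 1
   yields two codewords close to c0 + E, hence equal, hence D = E; but c0 + E
   cannot be a codeword, because c0 + P {0, 1} is within R of both c0 and
   c0 + E ([no_codeword_E]).  This is where R >= 2 is needed. *)

Section RowWeight.
Variables (F : finFieldType) (s r : nat).
Implicit Types (x y : 'M[F]_(s, r)) (i : 'I_s) (S : {set 'I_s}).

Lemma row_weight_ge x i j : x i j != 0%R -> j.+1 <= nrt_row_weight x i.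
Proof. exact: (@leq_bigmax_cond _ (fun j0 => x i j0 != 0%R) (fun j0 => j0.+1)). Qed.

Lemma row_weight_le x i n :
  (forall j, x i j != 0%R -> j.+1 <= n) -> nrt_row_weight x i <= n.
Proof. by move=> le_n; apply/bigmax_leqP. Qed.

Lemma row_weight_eq0 x i : (nrt_row_weight x i == 0) = (row i x == 0%R).
Proof.
apply/idP/idP => [/eqP w0 | /eqP x0].
- apply/eqP/rowP => j; rewrite !mxE; apply/eqP/negPn/negP => /row_weight_ge.
  by rewrite w0.
- rewrite -leqn0; apply: row_weight_le => j.
  by move/rowP/(_ j): x0; rewrite !mxE => ->; rewrite eqxx.
Qed.

Lemma row_weight_row x y i :
  row i x = row i y -> nrt_row_weight x i = nrt_row_weight y i.
Proof.
by move=> /rowP eq_xy; apply: eq_bigl => j; have := eq_xy j; rewrite !mxE => ->.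
Qed.

Lemma row_weight_opp x i : nrt_row_weight (- x) i = nrt_row_weight x i.
Proof. by apply: eq_bigl => j; rewrite mxE oppr_eq0. Qed.

Lemma row_weight_add x y i :
  nrt_row_weight (x + y) i <= maxn (nrt_row_weight x i) (nrt_row_weight y i).
Proof.
apply: row_weight_le => j; rewrite mxE leq_max.
have [/eqP -> | /row_weight_ge-> //] := boolP (x i j == 0%R).
by rewrite add0r => /row_weight_ge ->; rewrite orbT.
Qed.

Lemma row_weight_le_sub x y i :
  nrt_row_weight x i <= 1 -> row i x != row i y ->
  nrt_row_weight y i <= nrt_row_weight (x - y) i.
Proof.
move=> wx1 neq_xy.
have pos : 0 < nrt_row_weight (x - y) i.
  by rewrite lt0n row_weight_eq0 linearB /= subr_eq0.
have := row_weight_add x (- (x - y)) i.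
rewrite row_weight_opp opprB addrC subrK => /leq_trans; apply.
by rewrite geq_max (leq_trans wx1 pos) leqnn.
Qed.

Lemma row_weight_le_weight x i : nrt_row_weight x i <= nrt_weight x.
Proof. by rewrite /nrt_weight (bigD1 i) //= leq_addr. Qed.

Lemma weight_single_row x j :
  (forall i, i != j -> row i x = 0%R) -> nrt_weight x = nrt_row_weight x j.
Proof.
move=> x0; rewrite /nrt_weight (bigD1 j) //= big1 ?addn0 // => i /x0 /eqP.
by rewrite -row_weight_eq0 => /eqP.
Qed.

Lemma weight_opp x : nrt_weight (- x) = nrt_weight x.
Proof. by apply: eq_bigr => i _; rewrite row_weight_opp. Qed.

Lemma dist_translate z x y : nrt_dist (z + x) (z + y) = nrt_weight (x - y).
Proof. by rewrite /nrt_dist opprD addrACA subrr add0r. Qed.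

Definition pattern (S : {set 'I_s}) : 'M[F]_(s, r) :=
  (\matrix_(i, j) ((i \notin S) && (j == 0 :> nat))%:R)%R.

Lemma row_pattern_in S i : i \in S -> row i (pattern S) = 0%R.
Proof. by move=> iS; apply/rowP => j; rewrite !mxE iS. Qed.

Lemma row_pattern S S' i :
  (i \in S) = (i \in S') -> row i (pattern S) = row i (pattern S').
Proof. by move=> eqS; apply/rowP => j; rewrite !mxE eqS. Qed.

Lemma row_weight_pattern_le1 S i : nrt_row_weight (pattern S) i <= 1.
Proof.
apply: row_weight_le => j; rewrite mxE.
have [-> // | _] := eqVneq (nat_of_ord j) 0.
by rewrite andbF eqxx.
Qed.

Lemma pattern_addC S : (pattern S + pattern (~: S))%R = pattern set0.
Proof.
apply/matrixP => i j; rewrite !mxE in_setC in_set0.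
by case: (i \in S); rewrite /= ?mulr0n ?add0r ?addr0.
Qed.

Hypothesis r_gt0 : 0 < r.

Lemma row_weight_pattern S i : nrt_row_weight (pattern S) i = (i \notin S).
Proof.
apply/eqP; rewrite eqn_leq; apply/andP; split.
  case: (boolP (i \in S)) => iS /=; last exact: row_weight_pattern_le1.
  by rewrite leqn0 row_weight_eq0 row_pattern_in.
case: (boolP (i \notin S)) => // iS.
by apply: (row_weight_ge (j := Ordinal r_gt0)); rewrite mxE iS eqxx oner_neq0.
Qed.

Lemma weight_pattern S : nrt_weight (pattern S) = #|~: S|.
Proof.
rewrite /nrt_weight (eq_bigr _ (fun i _ => row_weight_pattern S i)).
rewrite -sum1_card [RHS]big_mkcond; apply: eq_bigr => i _.
by rewrite in_setC; case: (_ \notin _).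
Qed.

Lemma weight_pattern_sub S : nrt_weight (pattern S - pattern set0)%R = #|S|.
Proof.
rewrite -(pattern_addC S) opprD addrA subrr add0r weight_opp.
by rewrite weight_pattern // setCK.
Qed.

End RowWeight.

Lemma perfect_code_unique (F : finFieldType) (s r R : nat)
    (C : {set 'M[F]_(s, r)}) (c1 c2 x : 'M[F]_(s, r)) :
  perfect_code R C -> c1 \in C -> c2 \in C ->
  nrt_dist x c1 <= R -> nrt_dist x c2 <= R -> c1 = c2.
Proof.
move=> [disj _] C1 C2 d1 d2; case: (eqVneq c1 c2) => // ne.
have := disj _ _ C1 C2 ne; rewrite disjoint_subset => /subsetP/(_ x).
by rewrite !inE d1 d2 => /(_ isT).
Qed.

Section PerfectCode.
Variables (F : finFieldType) (R r : nat).
Variables (C : {set 'M[F]_(R.+2, r)}) (c0 : 'M[F]_(R.+2, r)).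
Hypotheses (r_gt0 : 0 < r) (perfC : perfect_code R C) (C_c0 : c0 \in C).

Local Notation P := (@pattern F R.+2 r).
Local Notation E := (P set0).

Lemma dist_pattern2 (j k : 'I_R.+2) :
  j != k -> nrt_dist (c0 + P [set j; k]) c0 = R.
Proof.
move=> jk; rewrite -[X in nrt_dist _ X]addr0 dist_translate subr0 weight_pattern //.
have card_jk : #|[set j; k]| = 2 by rewrite cards2 jk.
by apply/eqP; rewrite -(eqn_add2l 2) -{1}card_jk cardsC card_ord add2n.
Qed.

Lemma neighbour_exists (j : 'I_R.+2) :
  exists2 D, (c0 + D)%R \in C & nrt_weight (P [set j] - D)%R <= R.
Proof.
have [c C_c] := perfC.2 (c0 + P [set j])%R; rewrite inE => near_c.
exists (c - c0)%R; first by rewrite addrC subrK.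
by rewrite -(dist_translate c0) [(c0 + (c - c0))%R]addrC subrK.
Qed.

(* For R >= 2, the word c0 + E is not a codeword: c0 + P {0, 1} would lie
   within R of both c0 and c0 + E. *)
Lemma no_codeword_E : 1 < R -> (c0 + E)%R \notin C.
Proof.
move=> R_gt1; apply/negP => C_E.
pose j1 : 'I_R.+2 := Ordinal (isT : 1 < R.+2).
have neq01 : ord0 != j1 by [].
suff eq_c : c0 = (c0 + E)%R.
  have E0 : E = 0%R by apply: (addrI c0); rewrite addr0 -eq_c.
  have /matrixP/(_ ord0 (Ordinal r_gt0)) := E0.
  by rewrite !mxE in_set0 /= => /eqP; rewrite oner_eq0.
apply: (perfect_code_unique perfC C_c0 C_E (x := (c0 + P [set ord0; j1])%R)).
  by rewrite dist_pattern2.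
by rewrite dist_translate weight_pattern_sub // cards2 neq01.
Qed.

Section Neighbour.
Variables (j : 'I_R.+2) (D : 'M[F]_(R.+2, r)).
Hypotheses (C_D : (c0 + D)%R \in C).
Hypothesis near_D : nrt_weight (P [set j] - D)%R <= R.

Lemma neighbour_ne0 : D != 0%R.
Proof.
apply: contraTneq near_D => ->.
by rewrite subr0 weight_pattern // cardsC1 card_ord ltnn.
Qed.

(* Off row j, the codeword c0 + D agrees with c0 + E: otherwise the word
   c0 + P {j, k} would be within R of both c0 and c0 + D. *)
Lemma neighbour_rows k : k != j -> row k D = row k E.
Proof.
move=> kj; apply/eqP/negPn/negP => neq_k; have jk : j != k by rewrite eq_sym.
suff eq_c : c0 = (c0 + D)%R.
  have D0 : D = 0%R by apply: (addrI c0); rewrite addr0 -eq_c.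
  by have := neighbour_ne0; rewrite D0 eqxx.
apply: (perfect_code_unique perfC C_c0 C_D (x := (c0 + P [set j; k])%R)).
  by rewrite dist_pattern2.
rewrite dist_translate; apply: leq_trans near_D; apply: leq_sum => i _.
have [-> | ik] := eqVneq i k.
  have row_jk : row k (P [set j; k]) = 0%R.
    by apply: row_pattern_in; rewrite !inE eqxx orbT.
  have row_j : row k (P [set j]) = row k E.
    by apply: row_pattern; rewrite !inE (negbTE kj).
  rewrite (@row_weight_row _ _ _ _ (- D)%R); last first.
    by rewrite linearB /= row_jk sub0r linearN.
  rewrite row_weight_opp; apply: row_weight_le_sub; first exact: row_weight_pattern_le1.
  by rewrite row_j eq_sym.
have row_i : row i (P [set j; k]) = row i (P [set j]).
  by apply: row_pattern; rewrite !inE (negbTE ik) orbF.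
by rewrite (@row_weight_row _ _ _ _ (P [set j] - D)%R) // !linearB /= row_i.
Qed.

Lemma neighbour_near_E : 0 < R -> nrt_weight (E - D)%R <= R.
Proof.
move=> R_gt0; rewrite (weight_single_row (j := j)) => [|i ij]; last first.
  by rewrite linearB /= neighbour_rows // subrr.
apply: leq_trans (row_weight_add _ _ _) _; rewrite geq_max.
rewrite (leq_trans (row_weight_pattern_le1 _ _ _ _)) //=.
rewrite (@row_weight_row _ _ _ _ (P [set j] - D)%R).
  exact: leq_trans (row_weight_le_weight _ _) near_D.
by rewrite linearB linearN /= row_pattern_in ?inE // sub0r.
Qed.

End Neighbour.
End PerfectCode.

Theorem mainTheorem13 (F : finFieldType) (R r : nat) :
  (2 <= R)%N -> (0 < r)%N ->
  forall C : {set 'M[F]_(R.+2, r)}, ~ Perf R C.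
Proof.
move=> R_ge2 r_gt0 C [[C_gt1 _] perfC].
have [c0 C_c0] : exists c0, c0 \in C by apply/card_gt0P; apply: ltnW.
pose j1 : 'I_R.+2 := Ordinal (isT : 1 < R.+2).
have [D0 C_D0 near_D0] := neighbour_exists c0 perfC ord0.
have [D1 C_D1 near_D1] := neighbour_exists c0 perfC j1.
have R_gt0 : 0 < R by apply: leq_trans R_ge2.
(* Both neighbours lie within R of c0 + E, hence coincide. *)
have eqD : D0 = D1.
  apply: (addrI c0); apply: (perfect_code_unique perfC C_D0 C_D1
    (x := (c0 + pattern F r set0)%R)); rewrite dist_translate.
    exact: (neighbour_near_E r_gt0 perfC C_c0 C_D0 near_D0).
  exact: (neighbour_near_E r_gt0 perfC C_c0 C_D1 near_D1).
have D0E : D0 = pattern F r set0.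
  apply/row_matrixP => i; have [-> | i0] := eqVneq i ord0.
    by rewrite eqD; apply: (neighbour_rows r_gt0 perfC C_c0 C_D1 near_D1).
  exact: (neighbour_rows r_gt0 perfC C_c0 C_D0 near_D0).
by have := no_codeword_E r_gt0 perfC C_c0 R_ge2; rewrite -D0E C_D0.
Qed.
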